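(* Let $t>2$ be an integer and $n=2t+1$. In the cyclic group $\mathbb{Z}_{2t+1}$, the family of sets $\{2,3\},\{4,5\},\dots,\{2t-2,2t-1\}$ (i.e. $\{2i,2i+1\}$ for $1\le i\le t-1$) is a $(2t+1,t-1,2,0,t-1)$-DPDF which is not an EPDF (for any parameters).
   Context: In an additive group $G$ with identity $0$, let $G^*=G\setminus\{0\}$. For $D\subseteq G$, $\Delta(D)$ is the multiset $\{x-y:x,y\in D,x\ne y\}$; for $D_1,D_2\subseteq G$, $\Delta(D_1,D_2)$ is the multiset $\{x-y:x\in D_1,y\in D_2\}$. For a family $A=\{A_1,\dots,A_s\}$ of pairwise disjoint subsets, ${\rm Int}(A)=\bigcup_i\Delta(A_i)$ and ${\rm Ext}(A)=\bigcup_{i\ne j}\Delta(A_i,A_j)$ (multiset unions). For $|G|=v$, a $(v,s,k,\lambda,\mu)$-DPDF is a family of $s$ pairwise disjoint $k$-subsets of $G^*$ with union $S$ such that ${\rm Int}(A)$ contains each element of $S$ exactly $\lambda$ times and each element of $G\setminus(S\cup\{0\})$ exactly $\mu$ times; a $(v,s,k,\lambda,\mu)$-EPDF is defined the same way using ${\rm Ext}(A)$. *)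

From HB Require Import structures.
From mathcomp Require Import all_boot all_order all_algebra.
Set Implicit Arguments. Unset Strict Implicit. Unset Printing Implicit Defensive.
Import GRing.Theory.
Local Open Scope ring_scope.

Definition diff_pairs (G : finZmodType) (X Y : {set G}) (distinct : bool) (g : G)
  : {set G * G} :=
  [set p : G * G | [&& p.1 \in X, p.2 \in Y, (distinct ==> (p.1 != p.2)) &
                    p.1 - p.2 == g]].

(* multiplicity of g in Int(A) = union of Delta(A_i) *)
Definition int_mult (G : finZmodType) (s : nat) (A : 'I_s -> {set G}) (g : G) : nat :=
  \sum_(i < s) #|diff_pairs (A i) (A i) true g|.

(* multiplicity of g in Ext(A) = union over i != j of Delta(A_i, A_j) *)
Definition ext_mult (G : finZmodType) (s : nat) (A : 'I_s -> {set G}) (g : G) : nat :=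
  \sum_(i < s) \sum_(j < s | i != j)
     #|diff_pairs (A i) (A j) false g|.

Definition union_fam (G : finZmodType) (s : nat) (A : 'I_s -> {set G}) : {set G} :=
  \bigcup_(i < s) A i.

Definition base_family (G : finZmodType) (v s k : nat) (A : 'I_s -> {set G}) : Prop :=
  [/\ #|G| = v,
      (forall i : 'I_s, #|A i| = k /\ (0 : G) \notin A i) &
      (forall i j : 'I_s, i != j -> [disjoint A i & A j])].

Definition DPDF (G : finZmodType) (v s k lambda mu : nat) (A : 'I_s -> {set G}) : Prop :=
  base_family v k A /\
  forall g : G, g != 0 ->
    int_mult A g = (if g \in union_fam A then lambda else mu).

Definition EPDF (G : finZmodType) (v s k lambda mu : nat) (A : 'I_s -> {set G}) : Prop :=
  base_family v k A /\
  forall g : G, g != 0 ->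
    ext_mult A g = (if g \in union_fam A then lambda else mu).

(* The family {2i, 2i+1}, 1 <= i <= t-1, in Z_(2t+1), indexed by i-1 : 'I_(t-1). *)
Definition fam13 (t : nat) (i : 'I_(t.-1)) : {set 'Z_(2 * t + 1)} :=
  [set ((2 * i.+1)%N)%:R; ((2 * i.+1 + 1)%N)%:R].

Arguments DPDF {G} v s k lambda mu A.
Arguments EPDF {G} v s k lambda mu A.

From mathcomp Require Import all_boot all_order all_algebra zify.
Set Implicit Arguments.
Unset Strict Implicit.
Unset Printing Implicit Defensive.
Import GRing.Theory.
Local Open Scope ring_scope.

(* Each block {2i, 2i+1} has internal differences exactly 1 and -1 = 2t, so Int
   consists of t-1 copies of each of 1 and 2t, the two nonzero elements outside
   the union {2, ..., 2t-1}.  The differences between blocks i and j are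
   2(i-j) + {-1, 0, 0, 1} (no wrap-around modulo 2t+1 is possible for 2 and 3),
   so in Ext the element 2 occurs 2(t-2) times and 3 occurs (t-3) + (t-2) times.
   Both lie in the union, but one count is even and the other odd. *)

Lemma Zp_nat_eq p a b : (1 < p)%N -> ((a%:R : 'Z_p) == b%:R) = (a == b %[mod p]).
Proof. by move=> p_gt1; rewrite -(inj_eq val_inj) /= !val_Zp_nat. Qed.

Lemma Zp_nat_eq0 p a : (1 < p)%N -> (a < p)%N -> ((a%:R : 'Z_p) == 0) = (a == 0)%N.
Proof. by move=> p_gt1 a_lt; rewrite -(inj_eq val_inj) /= val_Zp_nat ?modn_small. Qed.

Lemma Zp_val_lt p : (1 < p)%N -> forall x : 'Z_p, (x < p)%N.
Proof. by move=> p_gt1 x; rewrite -[X in (_ < X)%N](Zp_cast p_gt1). Qed.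

Lemma Zp_nat_subr_eq p a b c :
  (1 < p)%N -> (a < p)%N -> (b < p)%N -> (c < p)%N ->
  ((a%:R : 'Z_p) - b%:R == c%:R) = [|| a == b + c | a + p == b + c]%N.
Proof.
move=> p_gt1 a_lt b_lt c_lt.
rewrite subr_eq -natrD Zp_nat_eq // (modn_small a_lt) addnC.
have [bc_lt | bc_ge] := ltnP (b + c) p; first by rewrite modn_small //; lia.
by rewrite -(subnK bc_ge) modnDr modn_small; lia.
Qed.

Lemma card_diff_pairs (G : finZmodType) (X Y : {set G}) d g :
  #|diff_pairs X Y d g| =
    (\sum_(x in X) \sum_(y in Y) ((d ==> (x != y)) && (x - y == g)%R : nat))%N.
Proof.
rewrite pair_big_dep /= -sum1_card big_mkcond [RHS]big_mkcond /=.
apply: eq_bigr => xy _; rewrite inE.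
by case: (xy.1 \in X); case: (xy.2 \in Y) => //=; case: (_ && _).
Qed.

Lemma sum_set2 (T : finType) (a b : T) (F : T -> nat) : a != b ->
  (\sum_(x in [set a; b]) F x = F a + F b)%N.
Proof. by move=> ab; rewrite big_setU1 ?big_set1 // in_set1. Qed.

Lemma sum_ord_eq_addn m i d : (\sum_(j < m) (i == j + d) = (d <= i < m + d))%N.
Proof. by elim: m => [|m IHm]; rewrite ?big_ord0 ?big_ord_recr /= ?IHm; lia. Qed.

Lemma sum_ord_ge m d : (\sum_(i < m) (d <= i) = m - d)%N.
Proof. by elim: m => [|m IHm]; rewrite ?big_ord0 ?big_ord_recr /= ?IHm; lia. Qed.

Lemma sum_ord_pairs_at_gap m d : (0 < d)%N ->
  (\sum_(i < m) \sum_(j < m | i != j) ((i : nat) == j + d) = m - d)%N.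
Proof.
move=> d_gt0; rewrite -sum_ord_ge; apply: eq_bigr => i _.
transitivity (\sum_(j < m) ((i : nat) == j + d))%N.
  by rewrite big_mkcond; apply: eq_bigr => j _ /=; case: eqP => [->|//] /=; lia.
by rewrite sum_ord_eq_addn; have := ltn_ord i; lia.
Qed.

Section Fam13.

Variable t : nat.
Hypothesis t_gt2 : (2 < t)%N.

Local Notation n := (2 * t + 1)%N.
Local Notation A := (@fam13 t).

Let n_gt1 : (1 < n)%N. Proof. lia. Qed.

Lemma mem_fam13 i c : (c < n)%N -> (c%:R \in A i) = (c %/ 2 == i.+1)%N.
Proof.
move=> c_lt; have i_lt := ltn_ord i.
by rewrite /fam13 in_set2 !Zp_nat_eq // !modn_small; lia.
Qed.

Lemma fam13_elt_neq (i : 'I_t.-1) : ((2 * i.+1)%:R : 'Z_n) != (2 * i.+1 + 1)%:R.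
Proof. by have i_lt := ltn_ord i; rewrite Zp_nat_eq // !modn_small; lia. Qed.

Lemma card_fam13 i : #|A i| = 2%N.
Proof. by rewrite cards2 fam13_elt_neq. Qed.

Lemma fam13_neq0 i : (0 : 'Z_n) \notin A i.
Proof. by rewrite -(mulr0n (1 : 'Z_n)) mem_fam13; lia. Qed.

Lemma fam13_disjoint i j : i != j -> [disjoint A i & A j].
Proof.
move=> ij; rewrite -setI_eq0; apply/eqP/setP => x; have x_lt := Zp_val_lt n_gt1 x.
rewrite in_setI in_set0 -[x]natr_Zp !mem_fam13 //.
by apply: contraNF ij => /andP[/eqP-> /eqP[/val_inj->]].
Qed.

Lemma mem_union_fam13 c :
  (c < n)%N -> (c%:R \in union_fam A) = (2 <= c <= 2 * t - 1)%N.
Proof.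
move=> c_lt; apply/bigcupP/idP => [[i _]|c_in].
  by rewrite mem_fam13 //; have := ltn_ord i; lia.
have i_lt : ((c %/ 2).-1 < t.-1)%N by lia.
by exists (Ordinal i_lt); rewrite // mem_fam13 //=; lia.
Qed.

Lemma base_family_fam13 : base_family n 2 A.
Proof.
split=> [|i|]; first by rewrite card_ord Zp_cast.
  by rewrite card_fam13 fam13_neq0.
exact: fam13_disjoint.
Qed.

Lemma sum_fam13 i (F : 'Z_n -> nat) :
  (\sum_(x in A i) F x = \sum_(a < 2) F (2 * i.+1 + a)%:R)%N.
Proof. by rewrite sum_set2 ?fam13_elt_neq // big_ord_recl big_ord1 /= addn0. Qed.

Lemma card_diff_pairs_fam13 i j d c : (c < n)%N ->
  #|diff_pairs (A i) (A j) d c%:R| =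
    (\sum_(a < 2) \sum_(b < 2)
       ((d ==> ((i : nat) != j) || ((a : nat) != b)) &&
        [|| 2 * i.+1 + a == 2 * j.+1 + b + c
          | 2 * i.+1 + a + n == 2 * j.+1 + b + c]))%N.
Proof.
move=> c_lt; rewrite card_diff_pairs sum_fam13; apply: eq_bigr => a _.
rewrite sum_fam13; apply: eq_bigr => b _.
move: (ltn_ord i) (ltn_ord j) (ltn_ord a) (ltn_ord b) => i_lt j_lt a_lt b_lt.
rewrite Zp_nat_subr_eq ?Zp_nat_eq ?modn_small; lia.
Qed.

Lemma int_mult_fam13 c : (c < n)%N ->
  int_mult A c%:R = (t.-1 * ((c == 1) + (c == 2 * t)))%N.
Proof.
move=> c_lt; rewrite /int_mult -[t.-1 in RHS]card_ord -sum_nat_const.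
apply: eq_bigr => i _; have i_lt := ltn_ord i.
by rewrite card_diff_pairs_fam13 // !big_ord_recl !big_ord0 !lift0 /=; lia.
Qed.

Lemma ext_mult_fam13_2 : ext_mult A 2%:R = (2 * (t.-1 - 1))%N.
Proof.
rewrite /ext_mult; transitivity (\sum_(i < t.-1) \sum_(j < t.-1 | i != j)
                (((i : nat) == j + 1) + ((i : nat) == j + 1)))%N.
  apply: eq_bigr => i _; apply: eq_bigr => j _.
  move: (ltn_ord i) (ltn_ord j) => i_lt j_lt.
  by rewrite card_diff_pairs_fam13 ?big_ord_recl ?big_ord0 ?lift0 /=; lia.
under eq_bigr do rewrite big_split.
by rewrite big_split /= sum_ord_pairs_at_gap //; lia.
Qed.

Lemma ext_mult_fam13_3 : ext_mult A 3%:R = ((t.-1 - 2) + (t.-1 - 1))%N.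
Proof.
rewrite /ext_mult; transitivity (\sum_(i < t.-1) \sum_(j < t.-1 | i != j)
                (((i : nat) == j + 2) + ((i : nat) == j + 1)))%N.
  apply: eq_bigr => i _; apply: eq_bigr => j _.
  move: (ltn_ord i) (ltn_ord j) => i_lt j_lt.
  by rewrite card_diff_pairs_fam13 ?big_ord_recl ?big_ord0 ?lift0 /=; lia.
under eq_bigr do rewrite big_split.
by rewrite big_split /= !sum_ord_pairs_at_gap.
Qed.

End Fam13.

Theorem mainTheorem13 (t : nat) (ht : (2 < t)%N) :
  DPDF (2 * t + 1) t.-1 2 0 t.-1 (@fam13 t) /\
  (forall v k lambda mu : nat, ~ EPDF v t.-1 k lambda mu (@fam13 t)).
Proof.
have n_gt1 : (1 < 2 * t + 1)%N by lia.
split.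
  split=> [|g]; first exact: base_family_fam13.
  have g_lt := Zp_val_lt n_gt1 g.
  rewrite -[g]natr_Zp Zp_nat_eq0 // int_mult_fam13 // mem_union_fam13 //.
  by case: ifP; lia.
move=> v k lambda mu [_ ext_mult_const].
have ext_mult_lambda c : (1 < c < 4)%N -> ext_mult (@fam13 t) c%:R = lambda.
  move=> c_bd; rewrite ext_mult_const ?Zp_nat_eq0 ?mem_union_fam13; try lia.
  by case: ifP; lia.
have := ext_mult_lambda 3%N isT; rewrite -(ext_mult_lambda 2%N isT).
by rewrite ext_mult_fam13_2 ?ext_mult_fam13_3 //; lia.
Qed.
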